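(* Let $R$ be a commutative ring with $\mathbb{Q}\subseteq R$. Let $\mathcal{E}$ (resp. $\mathcal{F}$) be a finitely generated projective module over a commutative unital $R$-algebra $\mathcal{A}$ (resp. $\mathcal{B}$), with a symmetric, strongly nondegenerate, full inner product $\langle\cdot,\cdot\rangle_{\mathcal{E}}$ (resp. $\langle\cdot,\cdot\rangle_{\mathcal{F}}$). Let $\phi:\mathcal{A}\to\mathcal{B}$ be an algebra isomorphism. Let $\Phi:\mathcal{E}\to\mathcal{F}$ be an $R$-linear bijection along $\phi$, i.e. $\Phi(ax)=\phi(a)\Phi(x)$, which is isometric: $\phi(\langle x,y\rangle_{\mathcal{E}})=\langle\Phi(x),\Phi(y)\rangle_{\mathcal{F}}$ for all $x,y\in\mathcal{E}$. Let $\Psi=\Phi^{-1}$. Define $\Phi_*:\mathcal{C}^\bullet(\mathcal{E})\to\mathcal{C}^\bullet(\mathcal{F})$ as follows: - $\Phi_*(a)=\phi(a)$ for $a\in\mathcal{A}$; - $\Phi_*(x)=\Phi(x)$ for $x\in\mathcal{E}$; - $(\Phi_*\mathsf{C})(y_1,\dots,y_{r-1})=\Phi\big(\mathsf{C}(\Psi(y_1),\dots,\Psi(y_{r-1}))\big)$ for $\mathsf{C}\in\mathcal{C}^r(\mathcal{E})$ with $r\ge2$. Then $\Phi_*$ is an isomorphism of graded Poisson algebras $(\mathcal{C}^\bullet(\mathcal{E}),[\cdot,\cdot],\wedge)\to(\mathcal{C}^\bullet(\mathcal{F}),[\cdot,\cdot],\wedge)$.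
   Context: Strongly nondegenerate: the induced map from the module to its $\operatorname{Hom}$-dual is an isomorphism. Full: every algebra element is a finite sum $\sum_i\langle x_i,y_i\rangle$. $\operatorname{Der}(\mathcal{A})$: $R$-linear derivations. $\mathcal{C}^0(\mathcal{E})=\mathcal{A}$ and $\mathcal{C}^1(\mathcal{E})=\mathcal{E}$. For $r\ge2$, $\mathcal{C}^r(\mathcal{E})$ is the set of $\mathsf{C}\in\operatorname{Hom}_R(\mathcal{E}^{\otimes_R(r-1)},\mathcal{E})$ admitting an $R$-multilinear symbol $\sigma_{\mathsf{C}}:\mathcal{E}^{\otimes(r-2)}\to\operatorname{Der}(\mathcal{A})$ with two properties: (1) $\sigma_{\mathsf{C}}(x_1,\dots,x_{r-2})\langle u,w\rangle=\langle\mathsf{C}(x_1,\dots,x_{r-2},u),w\rangle+\langle u,\mathsf{C}(x_1,\dots,x_{r-2},w)\rangle$; (2) for $r\ge3$ and $1\le i\le r-2$, $\langle\mathsf{C}(\dots,x_i,x_{i+1},\dots)+\mathsf{C}(\dots,x_{i+1},x_i,\dots),u\rangle=\sigma_{\mathsf{C}}(x_1,\dots,\widehat{x_i},\widehat{x_{i+1}},\dots,x_{r-1},u)\langle x_i,x_{i+1}\rangle$. The same definitions apply to $\mathcal{F}$ over $\mathcal{B}$. $i_x\mathsf{C}$ inserts $x$ in the first argument. $[\cdot,\cdot]$ is the unique $R$-bilinear graded skew-symmetric map $\mathcal{C}^r\times\mathcal{C}^s\to\mathcal{C}^{r+s-2}$ with: - $[a,b]=0$ and $[a,x]=0=[x,a]$;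 - $[x,y]=\langle x,y\rangle$; - $[\mathsf{D},a]=\sigma_{\mathsf{D}}(a)=-[a,\mathsf{D}]$ for $\mathsf{D}\in\mathcal{C}^2$; - $[\mathsf{C},x]=i_x\mathsf{C}=(-1)^{r+1}[x,\mathsf{C}]$ for $r\ge2$; - $[[\mathsf{C}_1,\mathsf{C}_2],x]=(-1)^s[[\mathsf{C}_1,x],\mathsf{C}_2]+[\mathsf{C}_1,[\mathsf{C}_2,x]]$. $\wedge$ is the unique degree-$0$ $R$-bilinear product with $a\wedge b=ab$, $a\wedge x=ax=x\wedge a$, and $[\mathsf{C}_1\wedge\mathsf{C}_2,x]=(-1)^s[\mathsf{C}_1,x]\wedge\mathsf{C}_2+\mathsf{C}_1\wedge[\mathsf{C}_2,x]$. An isomorphism of graded Poisson algebras is a bijective homogeneous degree-$0$ map compatible with $\wedge$ and $[\cdot,\cdot]$. *)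

From HB Require Import structures.
From mathcomp Require Import all_boot all_order all_algebra.
Set Implicit Arguments. Unset Strict Implicit. Unset Printing Implicit Defensive.
Import Order.TTheory GRing.Theory Num.Theory.
Local Open Scope ring_scope.

Section Cochains.
Variables (R : comNzRingType) (A : comAlgType R) (E : lmodType A).
Variable ip : E -> E -> A.

Definition rsc (r : R) (x : E) : E := r%:A *: x.

Definition A_linear (V W : lmodType A) (f : V -> W) : Prop :=
  forall (a : A) x y, f (a *: x + y) = a *: f x + f y.

(* finitely generated projective: a direct summand of a free module A^n *)
Definition fg_projective : Prop :=
  exists n (i : E -> 'rV[A]_n) (p : 'rV[A]_n -> E),
    [/\ A_linear i, A_linear p & forall x, p (i x) = x].

Definition ip_bilinear : Prop :=
  (forall (a : A) x y z, ip (a *: x + y) z = a * ip x z + ip y z) /\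
  (forall (a : A) x y z, ip z (a *: x + y) = a * ip z x + ip z y).

Definition ip_symmetric : Prop := forall x y, ip x y = ip y x.

(* x |-> <x, .> is a bijection E -> Hom_A(E, A) *)
Definition strongly_nondegenerate : Prop :=
  (forall x, (forall y, ip x y = 0) -> x = 0) /\
  (forall f : E -> A, (forall (a : A) x y, f (a *: x + y) = a * f x + f y) ->
     exists x, forall y, f y = ip x y).

Definition ip_full : Prop :=
  forall a : A, exists s : seq (E * E), a = \sum_(p <- s) ip p.1 p.2.

Definition good_inner_product : Prop :=
  [/\ ip_bilinear, ip_symmetric, strongly_nondegenerate & ip_full].

Definition upd k (v : {ffun 'I_k -> E}) (i : 'I_k) (x : E) : {ffun 'I_k -> E} :=
  [ffun j => if j == i then x else v j].
Definition fseq k (v : {ffun 'I_k -> E}) : seq E := [seq v i | i <- enum 'I_k].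
Definition of_seq k (s : seq E) : {ffun 'I_k -> E} := [ffun i : 'I_k => nth 0 s i].
Definition snoc k (v : {ffun 'I_k -> E}) (u : E) : {ffun 'I_k.+1 -> E} :=
  of_seq k.+1 (rcons (fseq v) u).
Definition fcons k (x : E) (v : {ffun 'I_k -> E}) : {ffun 'I_k.+1 -> E} :=
  of_seq k.+1 (x :: fseq v).
Definition swapadj k (v : {ffun 'I_k -> E}) (j : nat) : {ffun 'I_k -> E} :=
  let s := fseq v in
  of_seq k (take j s ++ [:: nth 0 s j.+1; nth 0 s j] ++ drop j.+2 s).
Definition dropadj k (v : {ffun 'I_k.+2 -> E}) (j : nat) : {ffun 'I_k -> E} :=
  let s := fseq v in of_seq k (take j s ++ drop j.+2 s).

Definition multilinE k (f : {ffun 'I_k -> E} -> E) : Prop :=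
  forall v i (r : R) x y,
    f (upd v i (rsc r x + y)) = rsc r (f (upd v i x)) + f (upd v i y).
Definition multilinA k (f : {ffun 'I_k -> E} -> A) : Prop :=
  forall v i (r : R) x y,
    f (upd v i (rsc r x + y)) = r *: f (upd v i x) + f (upd v i y).

Definition isDer (D : A -> A) : Prop :=
  (forall (r : R) a b, D (r *: a + b) = r *: D a + D b) /\
  (forall a b, D (a * b) = D a * b + a * D b).

(* property (2), for r = m+3 >= 3 *)
Definition symbol_cond2 m (C : {ffun 'I_m.+2 -> E} -> E)
    (sigma : {ffun 'I_m.+1 -> E} -> A -> A) : Prop :=
  forall (v : {ffun 'I_m.+2 -> E}) (j : nat) (u : E), (j < m.+1)%N ->
    ip (C v + C (swapadj v j)) u =
    sigma (snoc (dropadj v j) u) (ip (nth 0 (fseq v) j) (nth 0 (fseq v) j.+1)).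

(* sigma is a symbol for C in C^{k+2}(E) *)
Definition isSymbol k (C : {ffun 'I_k.+1 -> E} -> E)
    (sigma : {ffun 'I_k -> E} -> A -> A) : Prop :=
  [/\ forall a, multilinA (fun v => sigma v a),
      forall v, isDer (sigma v),
      forall v u w, sigma v (ip u w) = ip (C (snoc v u)) w + ip u (C (snoc v w)) &
      match k return ({ffun 'I_k.+1 -> E} -> E) -> ({ffun 'I_k -> E} -> A -> A) -> Prop with
      | 0 => fun _ _ => True
      | m.+1 => fun C s => symbol_cond2 C s
      end C sigma].

(* the ambient type of degree-n cochains: C^0 = A, C^1 = E,
   C^{k+2} inside maps E^{k+1} -> E *)
Definition cochain (n : nat) : Type :=
  match n with
  | 0 => A
  | 1 => E
  | k.+2 => {ffun 'I_k.+1 -> E} -> E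
  end.

Definition isCochain n : cochain n -> Prop :=
  match n return cochain n -> Prop with
  | 0 => fun _ => True
  | 1 => fun _ => True
  | k.+2 => fun C => multilinE C /\ exists sigma, isSymbol C sigma
  end.

Definition czero n : cochain n :=
  match n return cochain n with
  | 0 => (0 : A) | 1 => (0 : E) | k.+2 => fun _ => 0 end.
Definition cadd n : cochain n -> cochain n -> cochain n :=
  match n return cochain n -> cochain n -> cochain n with
  | 0 => fun a b : A => a + b
  | 1 => fun x y : E => x + y
  | k.+2 => fun C D v => C v + D v
  end.
Definition cscale n (r : R) : cochain n -> cochain n :=
  match n return cochain n -> cochain n with
  | 0 => fun a : A => r *: a
  | 1 => fun x : E => rsc r x
  | k.+2 => fun C v => rsc r (C v)
  end.

Definition iins k (x : E) : cochain k.+2 -> cochain k.+1 :=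
  match k return cochain k.+2 -> cochain k.+1 with
  | 0 => fun C => C (fcons x (of_seq 0 [::]))
  | m.+1 => fun C v => C (fcons x v)
  end.

(* A bilinear operation on homogeneous cochains, with an explicit target
   degree n: op r s n c d is the degree-n component of op(c, d). *)
Definition gop := forall r s n, cochain r -> cochain s -> cochain n.

Record isBracket (br : gop) : Prop := {
  br_closed : forall r s n c d, isCochain c -> isCochain d -> isCochain (br r s n c d);
  br_graded : forall r s n c d, isCochain c -> isCochain d ->
      (n != r + s - 2)%N || (r + s < 2)%N -> br r s n c d = czero n;
  br_linl : forall r s n (a : R) c c' d, isCochain c -> isCochain c' -> isCochain d ->
      br r s n (cadd (cscale a c) c') d = cadd (cscale a (br r s n c d)) (br r s n c' d);
  br_linr : forall r s n (a : R) c d d', isCochain c -> isCochain d -> isCochain d' ->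
      br r s n c (cadd (cscale a d) d') = cadd (cscale a (br r s n c d)) (br r s n c d');
  br_skew : forall r s n c d, isCochain c -> isCochain d ->
      br r s n c d = cscale (- (-1) ^+ (r * s)%N) (br s r n d c);
  br_EE : forall x y : E, br 1 1 0 x y = ip x y;
  br_symbol : forall (D : cochain 2) (a : A) sigma, isCochain D -> isSymbol D sigma ->
      br 2 0 0 D a = sigma (of_seq 0 [::]) a /\ br 0 2 0 a D = - sigma (of_seq 0 [::]) a;
  br_ins : forall k (C : cochain k.+2) (x : E), isCochain C ->
      br k.+2 1 k.+1 C x = iins x C /\
      br 1 k.+2 k.+1 x C = cscale ((-1) ^+ (k.+3)) (iins x C);
  br_jacobi : forall r s (c : cochain r) (d : cochain s) (x : E),
      isCochain c -> isCochain d -> (3 <= r + s)%N ->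
      br (r + s - 2)%N 1 (r + s - 3)%N (br r s (r + s - 2)%N c d) x =
      cadd (cscale ((-1) ^+ s) (br (r - 1)%N s (r + s - 3)%N (br r 1 (r - 1)%N c x) d))
           (br r (s - 1)%N (r + s - 3)%N c (br s 1 (s - 1)%N d x))
}.

Record isWedge (br : gop) (wd : gop) : Prop := {
  wd_closed : forall r s n c d, isCochain c -> isCochain d -> isCochain (wd r s n c d);
  wd_graded : forall r s n c d, isCochain c -> isCochain d ->
      (n != r + s)%N -> wd r s n c d = czero n;
  wd_linl : forall r s n (a : R) c c' d, isCochain c -> isCochain c' -> isCochain d ->
      wd r s n (cadd (cscale a c) c') d = cadd (cscale a (wd r s n c d)) (wd r s n c' d);
  wd_linr : forall r s n (a : R) c d d', isCochain c -> isCochain d -> isCochain d' ->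
      wd r s n c (cadd (cscale a d) d') = cadd (cscale a (wd r s n c d)) (wd r s n c d');
  wd_AA : forall a b : A, wd 0 0 0 a b = (a * b : A);
  wd_AE : forall (a : A) (x : E), wd 0 1 1 a x = (a *: x : E);
  wd_EA : forall (x : E) (a : A), wd 1 0 1 x a = (a *: x : E);
  wd_leibniz : forall r s (c : cochain r) (d : cochain s) (x : E),
      isCochain c -> isCochain d ->
      br (r + s)%N 1 (r + s - 1)%N (wd r s (r + s)%N c d) x =
      cadd (cscale ((-1) ^+ s) (wd (r - 1)%N s (r + s - 1)%N (br r 1 (r - 1)%N c x) d))
           (wd r (s - 1)%N (r + s - 1)%N c (br s 1 (s - 1)%N d x))
}.

End Cochains.

Section Transport.
Variables (R : comNzRingType) (A B : comAlgType R) (E : lmodType A) (F : lmodType B).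

Definition R_algebra_iso (phi : A -> B) : Prop :=
  [/\ forall a b, phi (a + b) = phi a + phi b,
      forall a b, phi (a * b) = phi a * phi b,
      phi 1 = 1,
      forall (r : R) a, phi (r *: a) = r *: phi a &
      bijective phi].

Variables (phi : A -> B) (Phi : E -> F) (Psi : F -> E).

Definition phistar n : cochain E n -> cochain F n :=
  match n return cochain E n -> cochain F n with
  | 0 => fun a : A => phi a
  | 1 => fun x : E => Phi x
  | k.+2 => fun C w => Phi (C [ffun i => Psi (w i)])
  end.

Variables (ipE : E -> E -> A) (ipF : F -> F -> B).

Definition graded_poisson_iso (f : forall n, cochain E n -> cochain F n)
    (brE wdE : gop E) (brF wdF : gop F) : Prop :=
  [/\ forall n (c : cochain E n), isCochain ipE c -> isCochain ipF (f n c),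
      forall n (c c' : cochain E n), isCochain ipE c -> isCochain ipE c' ->
        f n c = f n c' -> c = c',
      forall n (d : cochain F n), isCochain ipF d ->
        exists2 c : cochain E n, isCochain ipE c & f n c = d,
      forall r s n (c : cochain E r) (d : cochain E s),
        isCochain ipE c -> isCochain ipE d ->
        f n (brE r s n c d) = brF r s n (f r c) (f s d) &
      forall r s n (c : cochain E r) (d : cochain E s),
        isCochain ipE c -> isCochain ipE d ->
        f n (wdE r s n c d) = wdF r s n (f r c) (f s d)].

End Transport.

(* Phi_* is inverted by Psi_*, and it maps cochains to cochains because the symbol
   of Phi_* C is phi o sigma_C o phi^-1 with arguments pulled back along Psi.
   Compatibility with the bracket and the product goes by induction on the total
   degree.  In the lowest degrees it is the normalisation of the operations
   ([x, y] = <x, y>, [D, a] = sigma_D(a), a /\ b = ab).  Above them, a cochain of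
   positive degree on F is determined by its brackets with all y in F (through
   i_y, and through the nondegeneracy of <.,.>_F in degree 1), and the Jacobi,
   resp. Leibniz, rule expresses the bracket of [C1, C2], resp. C1 /\ C2, with x
   by operations of strictly smaller total degree. *)

From HB Require Import structures.
From mathcomp Require Import all_boot all_order all_algebra.
From mathcomp Require Import zify.
From Stdlib Require Import FunctionalExtensionality.
Import GRing.Theory.
Local Open Scope ring_scope.

Set Implicit Arguments. Unset Strict Implicit. Unset Printing Implicit Defensive.

Lemma morph_add0 (U V : zmodType) (f : U -> V) : {morph f : u v / u + v} -> f 0 = 0.
Proof. by move=> fD; apply: (addrI (f 0)); rewrite -fD !addr0. Qed.

Lemma morph_addN (U V : zmodType) (f : U -> V) : {morph f : u v / u + v} -> {morph f : u / - u}.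
Proof. by move=> fD u; apply: (addrI (f u)); rewrite -fD !subrr (morph_add0 fD). Qed.

Section ArgumentMaps.
Variables (R : comNzRingType) (A B : comAlgType R) (E : lmodType A) (F : lmodType B).
Variable f : E -> F.
Hypothesis f0 : f 0 = 0.

Definition map_args k (v : {ffun 'I_k -> E}) : {ffun 'I_k -> F} := [ffun i => f (v i)].

Lemma nth_map0 (s : seq E) i : nth 0 (map f s) i = f (nth 0 s i).
Proof. by elim: s i => [|x s IH] [|i] //=. Qed.

Lemma fseq_map_args k (v : {ffun 'I_k -> E}) : fseq (map_args v) = map f (fseq v).
Proof. by rewrite /fseq -map_comp; apply: eq_map => i; rewrite /= ffunE. Qed.

Lemma nth_fseq_map_args k (v : {ffun 'I_k -> E}) j :
  nth 0 (fseq (map_args v)) j = f (nth 0 (fseq v) j).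
Proof. by rewrite fseq_map_args nth_map0. Qed.

Lemma map_args_of_seq k (s : seq E) : map_args (of_seq k s) = of_seq k (map f s).
Proof. by apply/ffunP => i; rewrite !ffunE nth_map0. Qed.

Lemma map_args_upd k (v : {ffun 'I_k -> E}) i x :
  map_args (upd v i x) = upd (map_args v) i (f x).
Proof. by apply/ffunP => j; rewrite !ffunE; case: (j == i). Qed.

Lemma map_args_snoc k (v : {ffun 'I_k -> E}) u :
  map_args (snoc v u) = snoc (map_args v) (f u).
Proof. by rewrite /snoc map_args_of_seq map_rcons fseq_map_args. Qed.

Lemma map_args_fcons k (v : {ffun 'I_k -> E}) u :
  map_args (fcons u v) = fcons (f u) (map_args v).
Proof. by rewrite /fcons map_args_of_seq /= fseq_map_args. Qed.

Lemma map_args_swapadj k (v : {ffun 'I_k -> E}) j :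
  map_args (swapadj v j) = swapadj (map_args v) j.
Proof.
rewrite /swapadj map_args_of_seq !map_cat map_take map_drop /=.
by rewrite !fseq_map_args !nth_map0.
Qed.

Lemma map_args_dropadj k (v : {ffun 'I_k.+2 -> E}) j :
  map_args (dropadj v j) = dropadj (map_args v) j.
Proof. by rewrite /dropadj map_args_of_seq map_cat map_take map_drop fseq_map_args. Qed.

End ArgumentMaps.

Section CochainFacts.
Variables (R : comNzRingType) (A : comAlgType R) (E : lmodType A) (ip : E -> E -> A).

Definition gop_linl (op : gop E) : Prop :=
  forall r s n (a : R) (c c' : cochain E r) (d : cochain E s),
    isCochain ip c -> isCochain ip c' -> isCochain ip d ->
    op r s n (cadd (cscale a c) c') d = cadd (cscale a (op r s n c d)) (op r s n c' d).

Definition gop_linr (op : gop E) : Prop :=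
  forall r s n (a : R) (c : cochain E r) (d d' : cochain E s),
    isCochain ip c -> isCochain ip d -> isCochain ip d' ->
    op r s n c (cadd (cscale a d) d') = cadd (cscale a (op r s n c d)) (op r s n c d').

Lemma cadd_scaleN1 n (c : cochain E n) : cadd (cscale (-1) c) c = czero E n.
Proof.
case: n c => [|[|k]] c /=; first by rewrite scaleN1r addNr.
  by rewrite /rsc !scaleN1r addNr.
by apply: functional_extensionality => v; rewrite /rsc !scaleN1r addNr.
Qed.

Lemma gop_linl_zero op : gop_linl op ->
  forall s n (d : cochain E s), isCochain ip d -> op 0%N s n (0 : A) d = czero E n.
Proof.
move=> hop s n d hd; have := hop 0%N s n (-1) (0 : A) (0 : A) d I I hd.
by rewrite /= scaler0 addr0 cadd_scaleN1.
Qed.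

Lemma gop_linr_zero op : gop_linr op ->
  forall r n (c : cochain E r), isCochain ip c -> op r 0%N n c (0 : A) = czero E n.
Proof.
move=> hop r n c hc; have := hop r 0%N n (-1) c (0 : A) (0 : A) hc I I.
by rewrite /= scaler0 addr0 cadd_scaleN1.
Qed.

Lemma fcons_split k (v : {ffun 'I_k.+1 -> E}) :
  v = fcons (v ord0) [ffun i : 'I_k => v (lift ord0 i)].
Proof.
apply/ffunP => -[[|i] hi]; rewrite ffunE /=; first by congr (v _); apply: val_inj.
rewrite /fseq (nth_map (Ordinal (hi : i < k)%N)) ?size_enum_ord // ffunE.
by congr (v _); apply: val_inj; rewrite /= /bump /= nth_enum_ord.
Qed.

Lemma iins_inj k (C D : cochain E k.+2) : (forall x, iins x C = iins x D) -> C = D.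
Proof.
move=> hCD; apply: functional_extensionality => w; rewrite (fcons_split w).
have := hCD (w ord0); case: k C D hCD w => [|k] C D _ w /=; last first.
  by move/(congr1 (fun h => h [ffun i => w (lift ord0 i)])).
by have -> : [ffun i : 'I_0 => w (lift ord0 i)] = of_seq 0 [::] by apply/ffunP => -[].
Qed.

Hypotheses (ip_nondeg : forall x, (forall y, ip x y = 0) -> x = 0)
  (ip_linl : forall (a : A) x y z, ip (a *: x + y) z = a * ip x z + ip y z).

Lemma br_ins_inj br m (X Y : cochain E m) : isBracket ip br -> (0 < m)%N ->
  isCochain ip X -> isCochain ip Y ->
  (forall x, br m 1%N (m - 1)%N X x = br m 1%N (m - 1)%N Y x) -> X = Y.
Proof.
move=> hbr; case: m X Y => [|[|k]] // X Y _ hX hY hXY.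
  apply/eqP; rewrite -subr_eq0; apply/eqP/ip_nondeg => z.
  have := hXY z; rewrite /= !(br_EE hbr) => e.
  by rewrite addrC -scaleN1r ip_linl e mulN1r addNr.
apply: iins_inj => x.
have : br k.+2 1%N k.+1 X x = br k.+2 1%N k.+1 Y x := hXY x.
by rewrite (proj1 (br_ins hbr x hX)) (proj1 (br_ins hbr x hY)).
Qed.

End CochainFacts.

Section TransportData.
Variables (R : comNzRingType) (A B : comAlgType R) (E : lmodType A) (F : lmodType B).
Variables (ipE : E -> E -> A) (ipF : F -> F -> B).

Record isometric_transport (phi : A -> B) (g : B -> A) (Phi : E -> F) (Psi : F -> E)
    : Prop := IsometricTransport {
  tr_phiD : {morph phi : a b / a + b};
  tr_phiM : {morph phi : a b / a * b};
  tr_phiZ : forall (r : R) a, phi (r *: a) = r *: phi a;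
  tr_phiK : cancel phi g;
  tr_gK : cancel g phi;
  tr_PhiD : {morph Phi : x y / x + y};
  tr_PhiZ : forall r x, Phi (rsc r x) = rsc r (Phi x);
  tr_PhiK : cancel Phi Psi;
  tr_PsiK : cancel Psi Phi;
  tr_Phi_ip : forall x y, phi (ipE x y) = ipF (Phi x) (Phi y) }.

End TransportData.

Lemma isometric_transport_inv (R : comNzRingType) (A B : comAlgType R)
    (E : lmodType A) (F : lmodType B) ipE ipF phi g (Phi : E -> F) Psi :
  isometric_transport ipE ipF phi g Phi Psi -> isometric_transport ipF ipE g phi Psi Phi.
Proof.
case=> phiD phiM phiZ phiK gK PhiD PhiZ PhiK PsiK Phi_ip; split => //.
- by move=> a b; apply: (can_inj phiK); rewrite phiD !gK.
- by move=> a b; apply: (can_inj phiK); rewrite phiM !gK.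
- by move=> r a; apply: (can_inj phiK); rewrite phiZ !gK.
- by move=> x y; apply: (can_inj PhiK); rewrite PhiD !PsiK.
- by move=> r x; apply: (can_inj PhiK); rewrite PhiZ !PsiK.
- by move=> x y; rewrite -{1}(PsiK x) -{1}(PsiK y) -Phi_ip phiK.
Qed.

Lemma phistarK (R : comNzRingType) (A B : comAlgType R) (E : lmodType A) (F : lmodType B)
    (phi : A -> B) g (Phi : E -> F) Psi n :
  cancel phi g -> cancel Phi Psi ->
  cancel (@phistar _ _ _ _ _ phi Phi Psi n) (@phistar _ _ _ _ _ g Psi Phi n).
Proof.
move=> phiK PhiK; case: n => [|[|k]] c //=; apply: functional_extensionality => v.
by rewrite PhiK; congr (c _); apply/ffunP => i; rewrite !ffunE PhiK.
Qed.

Section Transport.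
Variables (R : comNzRingType) (A B : comAlgType R) (E : lmodType A) (F : lmodType B).
Variables (ipE : E -> E -> A) (ipF : F -> F -> B).
Variables (phi : A -> B) (g : B -> A) (Phi : E -> F) (Psi : F -> E).
Hypothesis htr : isometric_transport ipE ipF phi g Phi Psi.

Let phiD := tr_phiD htr.
Let phiM := tr_phiM htr.
Let phiZ := tr_phiZ htr.
Let gK := tr_gK htr.
Let PhiD := tr_PhiD htr.
Let PhiZ := tr_PhiZ htr.
Let PhiK := tr_PhiK htr.
Let PsiK := tr_PsiK htr.
Let Phi_ip := tr_Phi_ip htr.
Let htr' := isometric_transport_inv htr.
Let Psi0 : Psi 0 = 0 := morph_add0 (tr_PhiD htr').

Notation ps := (phistar phi Phi Psi).

Lemma phistar_symbol k (C : {ffun 'I_k.+1 -> E} -> E) sigma :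
  isSymbol ipE C sigma ->
  isSymbol ipF (fun w => Phi (C (map_args Psi w)))
    (fun w b => phi (sigma (map_args Psi w) (g b))).
Proof.
case=> hsA hsD hs1 hs2; split.
- move=> a v i r x y /=.
  by rewrite !map_args_upd (tr_PhiD htr') (tr_PhiZ htr') hsA phiD phiZ.
- move=> v; split => [r a b|a b].
    by rewrite (tr_phiD htr') (tr_phiZ htr') (proj1 (hsD _)) phiD phiZ.
  by rewrite (tr_phiM htr') (proj2 (hsD _)) phiD !phiM !gK.
- move=> v u w; rewrite (tr_Phi_ip htr') hs1 phiD !Phi_ip !PsiK.
  by rewrite -!map_args_snoc.
case: k C sigma hsA hsD hs1 hs2 => // m C sigma _ _ _ hs2 v j u hj /=.
rewrite -PhiD -{1}(PsiK u) -Phi_ip map_args_swapadj // hs2 // (tr_Phi_ip htr').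
by rewrite -!nth_fseq_map_args // map_args_snoc // map_args_dropadj.
Qed.

Lemma phistar_cochain n (c : cochain E n) : isCochain ipE c -> isCochain ipF (ps c).
Proof.
case: n c => [|[|k]] C //= [hC [sigma hs]]; split.
  move=> v i r x y; rewrite -[in RHS]PhiZ -PhiD.
  have -> : [ffun j => Psi (upd v i (rsc r x + y) j)] =
            upd (map_args Psi v) i (rsc r (Psi x) + Psi y).
    by rewrite -(tr_PhiZ htr') -(tr_PhiD htr') -map_args_upd.
  by rewrite hC -!map_args_upd.
by exists (fun w b => phi (sigma (map_args Psi w) (g b))); exact: phistar_symbol.
Qed.

Lemma phistar_czero n : ps (czero E n) = czero F n.
Proof.
case: n => [|[|k]] /=.
- exact: morph_add0 phiD.
- exact: morph_add0 PhiD.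
by apply: functional_extensionality => w; exact: morph_add0 PhiD.
Qed.

Lemma phistar_cadd_scale n a (c c' : cochain E n) :
  ps (cadd (cscale a c) c') = cadd (cscale a (ps c)) (ps c').
Proof.
case: n c c' => [|[|k]] c c' /=; first by rewrite phiD phiZ.
  by rewrite PhiD PhiZ.
by apply: functional_extensionality => w; rewrite PhiD PhiZ.
Qed.

Lemma phistar_iins k x (C : cochain E k.+2) : ps (iins x C) = iins (Phi x) (ps C).
Proof.
case: k C => [|k] C /=; last first.
  apply: functional_extensionality => w.
  rewrite -[RHS]/(Phi (C (map_args Psi (fcons (Phi x) w)))).
  by rewrite map_args_fcons // PhiK.
rewrite -[RHS]/(Phi (C (map_args Psi (fcons (Phi x) (of_seq 0 [::]))))).
by rewrite map_args_fcons // PhiK map_args_of_seq.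
Qed.

Section Brackets.
Hypotheses (ipF_nondeg : forall y, (forall z, ipF y z = 0) -> y = 0)
  (ipF_linl : forall (b : B) y y' z, ipF (b *: y + y') z = b * ipF y z + ipF y' z).
Unset Implicit Arguments.
Variables (brE wdE : gop E) (brF wdF : gop F).
Set Implicit Arguments.
Hypotheses (hbrE : isBracket ipE brE) (hwdE : isWedge ipE brE wdE)
  (hbrF : isBracket ipF brF) (hwdF : isWedge ipF brF wdF).

Lemma phistar_br_ins t (c : cochain E t) x : isCochain ipE c ->
  ps (brE t 1%N (t - 1)%N c x) = brF t 1%N (t - 1)%N (ps c) (Phi x).
Proof.
move=> hc; have hc' := phistar_cochain hc.
case: t c hc hc' => [|[|k]] c hc hc'.
- rewrite (br_graded hbrE (d := x) hc I) //.
  by rewrite (br_graded hbrF (d := Phi x : cochain F 1) hc' I) // phistar_czero.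
- by rewrite /= (br_EE hbrE) (br_EE hbrF) Phi_ip.
rewrite /= (proj1 (br_ins hbrE x hc)) (proj1 (br_ins hbrF (Phi x) hc')).
exact: phistar_iins.
Qed.

Lemma phistar_eq_by_ins m (X : cochain E m) (Y : cochain F m) : (0 < m)%N ->
  isCochain ipE X -> isCochain ipF Y ->
  (forall x, ps (brE m 1%N (m - 1)%N X x) = brF m 1%N (m - 1)%N Y (Phi x)) -> ps X = Y.
Proof.
move=> m_gt0 hX hY hXY; apply: (br_ins_inj ipF_nondeg ipF_linl hbrF) => //.
  exact: phistar_cochain.
by move=> y; rewrite -(PsiK y) -phistar_br_ins.
Qed.

Definition commute_below N (opE : gop E) (opF : gop F) : Prop :=
  forall r s n (c : cochain E r) (d : cochain E s), (r + s < N)%N ->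
    isCochain ipE c -> isCochain ipE d -> ps (opE r s n c d) = opF r s n (ps c) (ps d).

Section InsertionTerms.
Unset Implicit Arguments.
Variables (N : nat) (opE : gop E) (opF : gop F).
Set Implicit Arguments.
Hypotheses (opC : commute_below N opE opF)
  (opE_linl : gop_linl ipE opE) (opF_linl : gop_linl ipF opF)
  (opE_linr : gop_linr ipE opE) (opF_linr : gop_linr ipF opF).

(* For [r = 0] the inner bracket vanishes, and linearity kills the outer operation. *)
Lemma phistar_ins_l r s n (c : cochain E r) (d : cochain E s) x :
  (r + s <= N)%N ->
  isCochain ipE c -> isCochain ipE d ->
  ps (opE (r - 1)%N s n (brE r 1%N (r - 1)%N c x) d) =
  opF (r - 1)%N s n (brF r 1%N (r - 1)%N (ps c) (Phi x)) (ps d).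
Proof.
move=> hN hc hd; have hc' := phistar_cochain hc; have hd' := phistar_cochain hd.
case: r c hc hc' hN => [|r] c hc hc' hN.
  rewrite (br_graded hbrE (d := x) hc I) //.
  rewrite (br_graded hbrF (d := Phi x : cochain F 1) hc' I) //.
  by rewrite (gop_linl_zero opE_linl) // (gop_linl_zero opF_linl) // phistar_czero.
rewrite opC ?phistar_br_ins //; first lia.
exact: (br_closed hbrE (d := x) _ hc I).
Qed.

Lemma phistar_ins_r r s n (c : cochain E r) (d : cochain E s) x :
  (r + s <= N)%N ->
  isCochain ipE c -> isCochain ipE d ->
  ps (opE r (s - 1)%N n c (brE s 1%N (s - 1)%N d x)) =
  opF r (s - 1)%N n (ps c) (brF s 1%N (s - 1)%N (ps d) (Phi x)).
Proof.
move=> hN hc hd; have hc' := phistar_cochain hc; have hd' := phistar_cochain hd.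
case: s d hd hd' hN => [|s] d hd hd' hN.
  rewrite (br_graded hbrE (d := x) hd I) //.
  rewrite (br_graded hbrF (d := Phi x : cochain F 1) hd' I) //.
  by rewrite (gop_linr_zero opE_linr) // (gop_linr_zero opF_linr) // phistar_czero.
rewrite opC ?phistar_br_ins //; first lia.
exact: (br_closed hbrE (d := x) _ hd I).
Qed.

End InsertionTerms.

Lemma phistar_br_deg2 r s (c : cochain E r) (d : cochain E s) : (r + s = 2)%N ->
  isCochain ipE c -> isCochain ipE d -> ps (brE r s 0%N c d) = brF r s 0%N (ps c) (ps d).
Proof.
move=> rs2 hc hd; have hc' := phistar_cochain hc; have hd' := phistar_cochain hd.
case: r c hc hc' rs2 => [|[|[|r]]] c hc hc' rs2; rewrite ?addSn in rs2.
- rewrite add0n in rs2; subst s; have [_ [sigma hs]] := hd.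
  rewrite /= (proj2 (br_symbol hbrE c hd hs)).
  rewrite (proj2 (br_symbol hbrF (phi c) hd' (phistar_symbol hs))) /=.
  by rewrite (morph_addN phiD) (tr_phiK htr) map_args_of_seq.
- have ? : s = 1%N by case: rs2.
  by subst s; rewrite /= (br_EE hbrE) (br_EE hbrF) Phi_ip.
- have ? : s = 0%N by case: rs2; lia.
  subst s; have [_ [sigma hs]] := hc.
  rewrite /= (proj1 (br_symbol hbrE d hc hs)).
  rewrite (proj1 (br_symbol hbrF (phi d) hc' (phistar_symbol hs))) /=.
  by rewrite (tr_phiK htr) map_args_of_seq.
- by case: rs2; lia.
Qed.

Lemma phistar_br_step N : commute_below N brE brF -> commute_below N.+1 brE brF.
Proof.
move=> brC r s n c d hN hc hd; have hc' := phistar_cochain hc; have hd' := phistar_cochain hd.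
have [hg|] := boolP ((n != r + s - 2)%N || (r + s < 2)%N).
  by rewrite (br_graded hbrE hc hd hg) (br_graded hbrF hc' hd' hg) phistar_czero.
rewrite negb_or negbK -leqNgt => /andP [/eqP -> rs_ge2].
have [rs2|rs_ge3] : (r + s = 2)%N \/ (3 <= r + s)%N by lia.
  by rewrite rs2 phistar_br_deg2.
apply: phistar_eq_by_ins; [lia | exact: (br_closed hbrE) | exact: (br_closed hbrF) |].
move=> x.
have -> : (r + s - 2 - 1 = r + s - 3)%N by lia.
rewrite (br_jacobi hbrE x hc hd rs_ge3) (br_jacobi hbrF (Phi x) hc' hd' rs_ge3).
rewrite phistar_cadd_scale (phistar_ins_l brC (br_linl hbrE) (br_linl hbrF)) //.
by rewrite (phistar_ins_r brC (br_linr hbrE) (br_linr hbrF)).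
Qed.

Lemma phistar_wd_step N : commute_below N wdE wdF -> commute_below N.+1 wdE wdF.
Proof.
move=> wdC r s n c d hN hc hd; have hc' := phistar_cochain hc; have hd' := phistar_cochain hd.
have [hg|/negPn/eqP ->] := boolP (n != r + s)%N.
  by rewrite (wd_graded hwdE hc hd hg) (wd_graded hwdF hc' hd' hg) phistar_czero.
case: (posnP (r + s)) => [rs0|rs_gt0].
  case: r s c d hc hd hc' hd' hN rs0 => [|r] [|s] // c d _ _ _ _ _ _.
  by rewrite /= (wd_AA hwdE) (wd_AA hwdF) phiM.
apply: phistar_eq_by_ins => //; [exact: (wd_closed hwdE) | exact: (wd_closed hwdF) |].
move=> x.
rewrite (wd_leibniz hwdE x hc hd) (wd_leibniz hwdF (Phi x) hc' hd').
rewrite phistar_cadd_scale (phistar_ins_l wdC (wd_linl hwdE) (wd_linl hwdF)) //.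
by rewrite (phistar_ins_r wdC (wd_linr hwdE) (wd_linr hwdF)).
Qed.

Lemma phistar_br r s n (c : cochain E r) (d : cochain E s) :
  isCochain ipE c -> isCochain ipE d -> ps (brE r s n c d) = brF r s n (ps c) (ps d).
Proof.
have brC N : commute_below N brE brF by elim: N => // N; exact: phistar_br_step.
exact: brC (r + s).+1 r s n c d (ltnSn _).
Qed.

Lemma phistar_wd r s n (c : cochain E r) (d : cochain E s) :
  isCochain ipE c -> isCochain ipE d -> ps (wdE r s n c d) = wdF r s n (ps c) (ps d).
Proof.
have wdC N : commute_below N wdE wdF by elim: N => // N; exact: phistar_wd_step.
exact: wdC (r + s).+1 r s n c d (ltnSn _).
Qed.

End Brackets.

End Transport.

Theorem mainTheorem13
  (R : comNzRingType) (QinR : {rmorphism rat -> R})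
  (A B : comAlgType R) (E : lmodType A) (F : lmodType B)
  (ipE : E -> E -> A) (ipF : F -> F -> B)
  (fgpE : fg_projective E) (fgpF : fg_projective F)
  (hipE : good_inner_product ipE) (hipF : good_inner_product ipF)
  (phi : A -> B) (hphi : R_algebra_iso phi)
  (Phi : E -> F) (Psi : F -> E)
  (Phi_add : forall x y, Phi (x + y) = Phi x + Phi y)
  (Phi_R : forall (r : R) x, Phi (rsc r x) = rsc r (Phi x))
  (Phi_along : forall (a : A) x, Phi (a *: x) = phi a *: Phi x)
  (PhiK : cancel Phi Psi) (PsiK : cancel Psi Phi)
  (Phi_isom : forall x y, phi (ipE x y) = ipF (Phi x) (Phi y))
  (brE wdE : gop E) (brF wdF : gop F)
  (hbrE : isBracket ipE brE) (hwdE : isWedge ipE brE wdE)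
  (hbrF : isBracket ipF brF) (hwdF : isWedge ipF brF wdF) :
  graded_poisson_iso ipE ipF (phistar phi Phi Psi) brE wdE brF wdF.
Proof.
case: hphi => phiD phiM _ phiZ [g phiK gK].
case: hipF => [[ipF_linl _] _ [ipF_nondeg _] _].
have htr : isometric_transport ipE ipF phi g Phi Psi by split.
have htr' := isometric_transport_inv htr.
split=> [n c|n c c' _ _|n d hd|r s n c d|r s n c d].
- by move=> hc; exact: (phistar_cochain htr hc).
- exact/can_inj/phistarK.
- exists (phistar g Psi Phi d); first exact: phistar_cochain htr' _ _ hd.
  exact: phistarK.
- exact: (phistar_br htr ipF_nondeg ipF_linl hbrE hbrF).
- exact: (phistar_wd htr ipF_nondeg ipF_linl hbrE hwdE hbrF hwdF).
Qed.
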